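(* Let $R$ be a von Neumann regular ring with $\omega(\Gamma'(R))<\infty$. Then $\Gamma'(R)$ is a perfect graph.
   Context: All rings are commutative with identity $1\neq 0$. $W^*(R)$ denotes the set of non-zero non-unit elements of $R$. The cozero-divisor graph $\Gamma'(R)$ is the simple graph with vertex set $W^*(R)$, in which distinct $a,b$ are adjacent iff $a\notin Rb$ and $b\notin Ra$. A ring $R$ is von Neumann regular if for every $r\in R$ there is $s\in R$ with $r=r^2s$. $\omega(G)$ is the clique number of a graph $G$ and $\chi(G)$ its chromatic number. A graph $G$ is perfect if every induced subgraph $H$ of $G$ satisfies $\omega(H)=\chi(H)$. *)

From HB Require Import structures.
From mathcomp Require Import all_boot all_order all_algebra.
Set Implicit Arguments. Unset Strict Implicit. Unset Printing Implicit Defensive.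
Import GRing.Theory.
Local Open Scope ring_scope.

Definition is_unit (R : comNzRingType) (x : R) : Prop := exists y : R, x * y = 1.

Definition Wstar (R : comNzRingType) (x : R) : Prop := x <> 0 /\ ~ is_unit x.

Definition in_principal (R : comNzRingType) (a b : R) : Prop := exists r : R, a = r * b.

Definition cozero_adj (R : comNzRingType) (a b : R) : Prop :=
  [/\ Wstar a, Wstar b, a <> b, ~ in_principal a b & ~ in_principal b a].

Definition von_neumann_regular (R : comNzRingType) : Prop :=
  forall r : R, exists s : R, r = r ^+ 2 * s.

(* ---------- Graph-theoretic notions for a (possibly infinite) simple graph
   given by an adjacency relation [adj] on a type [T]; a vertex subset is a
   predicate [S]; the induced subgraph on S is (S, adj restricted to S). ---- *)

Definition is_clique (T : eqType) (adj : T -> T -> Prop) (S : T -> Prop) (l : seq T) : Prop :=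
  [/\ uniq l, (forall x, x \in l -> S x) &
      (forall x y, x \in l -> y \in l -> x <> y -> adj x y)].

Definition clique_number_is (T : eqType) (adj : T -> T -> Prop) (S : T -> Prop) (n : nat) : Prop :=
  (exists l, is_clique adj S l /\ size l = n) /\
  (forall l, is_clique adj S l -> (size l <= n)%N).

Definition finite_clique_number (T : eqType) (adj : T -> T -> Prop) (S : T -> Prop) : Prop :=
  exists n : nat, forall l, is_clique adj S l -> (size l <= n)%N.

Definition proper_coloring (T : eqType) (adj : T -> T -> Prop) (S : T -> Prop) (n : nat)
  (c : T -> nat) : Prop :=
  (forall x, S x -> (c x < n)%N) /\
  (forall x y, S x -> S y -> adj x y -> c x <> c y).

Definition colorable (T : eqType) (adj : T -> T -> Prop) (S : T -> Prop) (n : nat) : Prop :=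
  exists c : T -> nat, proper_coloring adj S n c.

Definition chromatic_number_is (T : eqType) (adj : T -> T -> Prop) (S : T -> Prop) (n : nat) : Prop :=
  colorable adj S n /\ (forall m, colorable adj S m -> (n <= m)%N).

(* G = (V, adj) is perfect: every induced subgraph H satisfies omega(H) = chi(H),
   equality being taken in nat \cup {infinity}: for every finite n,
   omega(H) = n iff chi(H) = n. *)
Definition perfect (T : eqType) (adj : T -> T -> Prop) (V : T -> Prop) : Prop :=
  forall S : T -> Prop, (forall x, S x -> V x) ->
    forall n : nat, clique_number_is adj S n <-> chromatic_number_is adj S n.

From HB Require Import structures.
From mathcomp Require Import all_boot all_order all_algebra.
From mathcomp Require Import boolp.
Set Implicit Arguments. Unset Strict Implicit. Unset Printing Implicit Defensive.
Import GRing.Theory.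

(* The members of a complete family of orthogonal idempotents of R form a
   clique, so there is such a family of maximal length, and maximality
   forces each member e to be primitive. By regularity, b e <> 0 then gives
   e \in R b, hence a \in R b exactly when the support {e | a e <> 0} of a
   is contained in that of b. So every induced subgraph of the
   cozero-divisor graph is the incomparability graph of the inclusion
   preorder on finitely many supports: its cliques are antichains and chain
   partitions are proper colourings, and Dilworth's theorem (in Galvin's
   inductive proof) gives chi = omega. *)

Section Dilworth.
Variables (T : finType) (le : rel T).
Hypotheses (le_refl : reflexive le) (le_trans : transitive le).

Definition comparable_rel x y := le x y || le y x.

Definition antichain (A : {set T}) :=
  [forall x in A, forall y in A, (x != y) ==> ~~ comparable_rel x y].

Definition width_le (P : {set T}) (n : nat) :=
  forall A : {set T}, A \subset P -> antichain A -> #|A| <= n.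

Definition chain_coloring (P : {set T}) (n : nat) (f : T -> nat) :=
  {in P, forall x, f x < n} /\ {in P &, forall x y, f x = f y -> comparable_rel x y}.

Lemma antichainP (A : {set T}) :
  reflect {in A &, forall x y, x != y -> ~~ comparable_rel x y} (antichain A).
Proof.
apply: (iffP forall_inP) => [H x y xA yA|H x xA].
  by move/forall_inP: (H x xA) => /(_ y yA) /implyP.
by apply/forall_inP => y yA; apply/implyP; apply: H.
Qed.

Lemma exists_maximal (Q : {set T}) x0 : x0 \in Q ->
  exists2 x, x \in Q & forall y, y \in Q -> le x y -> le y x.
Proof.
move=> Qx0; have [a aQ a_max] := arg_maxnP (fun b => #|[set y in Q | le y b]|) Qx0.
exists a => // y yQ lay; apply/negPn/negP => nlya.
have := a_max y yQ; apply/negP; rewrite -ltnNge; apply: proper_card.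
apply/properP; split.
  by apply/subsetP => z; rewrite !inE => /andP[-> lza]; apply: le_trans lza lay.
by exists y; rewrite !inE ?yQ ?le_refl.
Qed.

Lemma exists_max_antichain (P : {set T}) :
  exists2 A : {set T}, (A \subset P) && antichain A & width_le P #|A|.
Proof.
pose w := \max_(A : {set T} | (A \subset P) && antichain A) #|A|.
have [A A_anti wA] : {A : {set T} | (A \subset P) && antichain A & w = #|A|}.
  apply: eq_bigmax_cond; apply/card_gt0P; exists set0.
  by rewrite unfold_in sub0set; apply/antichainP => x y; rewrite inE.
by exists A => // B BP B_anti; rewrite -wA; apply: leq_bigmax_cond; rewrite BP.
Qed.

Lemma chain_coloring_widen (P : {set T}) n m f :
  n <= m -> chain_coloring P n f -> chain_coloring P m f.
Proof. by move=> nm [f_lt f_chain]; split=> // x /f_lt /leq_trans; apply. Qed.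

Lemma chain_coloring_extend (P K : {set T}) n f :
  {in K &, forall x y, comparable_rel x y} -> chain_coloring (P :\: K) n f ->
  chain_coloring P n.+1 (fun x => if x \in K then n else f x).
Proof.
move=> K_chain [f_lt f_chain].
have PK x : x \in P -> x \notin K -> f x < n by move=> xP xK; apply: f_lt; rewrite inE xK.
split=> [x xP | x y xP yP].
  by case: ifPn => xK; [exact: ltnSn | exact/ltnW/PK].
case: ifPn => xK; case: ifPn => yK.
- by move=> _; apply: K_chain.
- by move=> nfy; have := PK y yP yK; rewrite -nfy ltnn.
- by move=> fxn; have := PK x xP xK; rewrite fxn ltnn.
- by apply: f_chain; rewrite inE ?xK ?yK.
Qed.

Lemma chain_coloring_antichain_onto (P A : {set T}) n f :
  chain_coloring P n f -> A \subset P -> antichain A -> #|A| = n ->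
  forall i, i < n -> exists2 y, y \in A & f y = i.
Proof.
move=> [f_lt f_chain] AP /antichainP A_anti A_card i i_lt.
have f_uniq : uniq [seq f y | y <- enum A].
  rewrite map_inj_in_uniq ?enum_uniq // => x y; rewrite !mem_enum => xA yA fxy.
  apply/eqP; apply/negPn/negP => /(A_anti x y xA yA); rewrite f_chain //.
  - exact: (subsetP AP).
  - exact: (subsetP AP).
have f_sub : {subset [seq f y | y <- enum A] <= iota 0 n}.
  by move=> j /mapP[y]; rewrite mem_enum => yA ->; rewrite mem_iota f_lt // (subsetP AP).
have f_size : size (iota 0 n) <= size [seq f y | y <- enum A].
  by rewrite size_iota size_map -cardE A_card.
have [_ f_onto] := uniq_min_size f_uniq f_sub f_size.
have : i \in iota 0 n by rewrite mem_iota.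
by rewrite -f_onto // => /mapP[y]; rewrite mem_enum => yA ->; exists y.
Qed.

Section GalvinStep.
Variables (P : {set T}) (a : T) (w : nat) (f : T -> nat) (A0 : {set T}).
Hypotheses (aP : a \in P) (f_col : chain_coloring (P :\ a) w f).
Hypothesis wP' : width_le (P :\ a) w.
Hypotheses (A0P' : A0 \subset P :\ a) (A0_anti : antichain A0) (A0_card : #|A0| = w).

Definition in_max_antichain y :=
  [exists A : {set T}, [&& A \subset P :\ a, antichain A, #|A| == w & y \in A]].

Lemma in_max_antichainP y :
  reflect (exists A : {set T}, [/\ A \subset P :\ a, antichain A, #|A| = w & y \in A])
          (in_max_antichain y).
Proof.
apply: (iffP existsP) => [[A /and4P[AP' A_anti /eqP A_card yA]]|[A [AP' A_anti A_card yA]]];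
  by exists A; rewrite ?AP' ?A_anti ?A_card ?eqxx.
Qed.

Lemma in_max_antichain_sub y : in_max_antichain y -> y \in P :\ a.
Proof. by case/in_max_antichainP => A [AP' _ _ /(subsetP AP')]. Qed.

(* Galvin's choice: the largest element of colour [i] that lies in a maximum
   antichain of [P :\ a]. *)
Definition is_top_of_color i z :=
  [&& in_max_antichain z, f z == i &
      [forall y, in_max_antichain y && (f y == i) ==> le y z]].

Definition top_of_color i := odflt a [pick z | is_top_of_color i z].

Lemma top_of_colorP i : i < w ->
  [/\ in_max_antichain (top_of_color i), f (top_of_color i) = i &
      forall y, in_max_antichain y -> f y = i -> le y (top_of_color i)].
Proof.
move=> i_lt; suff : is_top_of_color i (top_of_color i).
  case/and3P=> top_max /eqP top_col /forallP top_ge; split=> // y y_max y_col.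
  by move/implyP: (top_ge y); apply; rewrite y_max y_col eqxx.
rewrite /top_of_color; case: pickP => [z //|no_top].
have [y0 y0A0 y0_col] := chain_coloring_antichain_onto f_col A0P' A0_anti A0_card i_lt.
have y0Q : y0 \in [set y | in_max_antichain y & f y == i].
  by rewrite inE y0_col eqxx andbT; apply/in_max_antichainP; exists A0.
have [z] := exists_maximal y0Q; rewrite inE => /andP[z_max /eqP z_col] z_maximal.
case/negP: (negbT (no_top z)); rewrite /is_top_of_color z_max z_col eqxx /=.
apply/forallP => y; apply/implyP => /andP[y_max /eqP y_col].
have [_ f_chain] := f_col.
have /orP[lzy|//] : comparable_rel z y.
  by apply: f_chain; rewrite ?z_col ?y_col // in_max_antichain_sub.
by apply: z_maximal lzy; rewrite inE y_max y_col eqxx.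
Qed.

Lemma top_of_color_in i : i < w -> top_of_color i \in P.
Proof.
by case/top_of_colorP => /in_max_antichain_sub; rewrite inE => /andP[].
Qed.

Lemma top_of_color_incomparable i j : i < w -> j < w -> i != j ->
  ~~ le (top_of_color i) (top_of_color j).
Proof.
move=> i_lt j_lt nij; apply/negP => le_ij.
have [/in_max_antichainP[B [BP' B_anti B_card topjB]] topj_col _] := top_of_colorP j_lt.
have [z zB z_col] := chain_coloring_antichain_onto f_col BP' B_anti B_card i_lt.
have [_ _ topi_ge] := top_of_colorP i_lt.
have lzi : le z (top_of_color i) by apply: topi_ge => //; apply/in_max_antichainP; exists B.
have nz_topj : z != top_of_color j.
  by apply: contra_neq nij => ezj; rewrite -z_col ezj topj_col.
have := antichainP _ B_anti z (top_of_color j) zB topjB nz_topj.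
by rewrite /comparable_rel (le_trans lzi le_ij).
Qed.

Definition chain_below i :=
  a |: [set y in P :\ a | (f y == i) && le y (top_of_color i)].

Lemma chain_below_chain i : i < w -> le (top_of_color i) a ->
  {in chain_below i &, forall x y, comparable_rel x y}.
Proof.
move=> i_lt le_topa; have [_ f_chain] := f_col.
have below y : y \in chain_below i -> y != a -> [/\ y \in P :\ a, f y = i & le y a].
  rewrite /chain_below in_setU1 => /orP[/eqP ->|]; first by rewrite eqxx.
  rewrite inE => /andP[yP' /andP[/eqP y_col ly]] _.
  by split=> //; apply: le_trans ly le_topa.
move=> x y xK yK; case: (eqVneq x a) => [->|nxa]; case: (eqVneq y a) => [->|nya].
- by rewrite /comparable_rel le_refl.
- by have [_ _ lya] := below y yK nya; rewrite /comparable_rel lya orbT.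
- by have [_ _ lxa] := below x xK nxa; rewrite /comparable_rel lxa.
- have [xP' x_col _] := below x xK nxa; have [yP' y_col _] := below y yK nya.
  by apply: f_chain; rewrite ?x_col ?y_col.
Qed.

Lemma width_le_without_chain_below i : i < w -> width_le (P :\: chain_below i) w.-1.
Proof.
move=> i_lt A AP A_anti.
have AP' : A \subset P :\ a.
  apply/subsetP => y /(subsetP AP); rewrite inE => /andP[yK yP].
  by rewrite !inE yP andbT; apply: contraNneq yK => ->; apply: setU11.
have := wP' AP' A_anti; rewrite leq_eqVlt => /orP[/eqP A_card|]; last by case: w.
have [y yA y_col] := chain_coloring_antichain_onto f_col AP' A_anti A_card i_lt.
have [_ _ topi_ge] := top_of_colorP i_lt.
have yK : y \in chain_below i.
  rewrite /chain_below in_setU1 inE (subsetP AP' y yA) y_col eqxx topi_ge ?orbT //.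
  by apply/in_max_antichainP; exists A.
by have := subsetP AP y yA; rewrite inE yK.
Qed.

Lemma width_gt_tops n : (forall i, i < w -> ~~ comparable_rel (top_of_color i) a) ->
  width_le P n -> w < n.
Proof.
move=> tops_a wP; set X := a |: [set top_of_color i | i : 'I_w].
have top_inj : injective (fun i : 'I_w => top_of_color i).
  move=> i j /(congr1 f); have [_ -> _] := top_of_colorP (ltn_ord i).
  by have [_ -> _] := top_of_colorP (ltn_ord j); apply: val_inj.
have aX : a \notin [set top_of_color i | i : 'I_w].
  apply/imsetP => -[i _ ai]; have := tops_a i (ltn_ord i).
  by rewrite -ai /comparable_rel le_refl.
have XP : X \subset P.
  apply/subsetP => y; rewrite !inE => /orP[/eqP -> // | /imsetP[i _ ->]].
  exact: top_of_color_in.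
suff X_anti : antichain X.
  by have := wP X XP X_anti; rewrite cardsU1 aX card_imset // card_ord.
apply/antichainP => y z; rewrite !inE.
case/orP=> [/eqP ->|/imsetP[i _ ->]]; case/orP=> [/eqP ->|/imsetP[j _ ->]].
- by rewrite eqxx.
- by move=> _; rewrite /comparable_rel orbC; apply: tops_a.
- by move=> _; apply: tops_a.
- move=> nij; have nij' : nat_of_ord i != j by apply: contraNneq nij => /val_inj ->.
  by rewrite /comparable_rel negb_or !top_of_color_incomparable // eq_sym.
Qed.

End GalvinStep.

Theorem dilworth (P : {set T}) n : width_le P n -> exists f, chain_coloring P n f.
Proof.
have [N] := ubnP #|P|; elim: N P n => // N IH P n P_lt wP.
have [->|[a0 a0P]] := set_0Vmem P; first by exists (fun=> 0); split=> x; rewrite inE.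
have [a aP a_max] := exists_maximal a0P.
have P'_lt : #|P :\ a| < N by move: P_lt; rewrite (cardsD1 a P) aP.
have [A0 /andP[A0P' A0_anti] wP'] := exists_max_antichain (P :\ a).
set w := #|A0| in wP'; have A0_card : #|A0| = w by [].
have [f f_col] := IH _ _ P'_lt wP'.
have w_le : w <= n by apply: wP A0_anti; apply: subset_trans A0P' (subsetDl _ _).
pose top := top_of_color P a w f.
have [/existsP[i top_a]|/existsPn tops_a] :=
  boolP [exists i : 'I_w, comparable_rel (top i) a].
- have top_in := top_of_color_in f_col A0P' A0_anti A0_card (ltn_ord i).
  have top_le_a : le (top i) a by case/orP: top_a => // /(a_max _ top_in).
  pose K := chain_below P a w f i.
  have PK_lt : #|P :\: K| < N.
    apply: leq_ltn_trans P'_lt; apply/subset_leq_card/subsetP => y.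
    by rewrite !inE => /andP[/norP[-> _] ->].
  have [g g_col] := IH _ _ PK_lt
    (width_le_without_chain_below f_col wP' A0P' A0_anti A0_card (ltn_ord i)).
  exists (fun x => if x \in K then w.-1 else g x); apply: chain_coloring_widen w_le _.
  rewrite -[X in chain_coloring _ X _](prednK (leq_ltn_trans (leq0n i) (ltn_ord i))).
  exact: chain_coloring_extend (chain_below_chain f_col (ltn_ord i) top_le_a) g_col.
- have w_lt : w < n.
    apply: (width_gt_tops aP f_col A0P' A0_anti A0_card _ wP) => i i_lt.
    exact: (tops_a (Ordinal i_lt)).
  exists (fun x => if x \in [set a] then w else f x); apply: chain_coloring_widen w_lt _.
  apply: chain_coloring_extend => // x y; rewrite !inE => /eqP -> /eqP ->.
  by rewrite /comparable_rel le_refl.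
Qed.

End Dilworth.

Section Graph.
Variables (T : eqType) (adj : T -> T -> Prop) (S : T -> Prop).

Lemma colorable_clique_size m l : colorable adj S m -> is_clique adj S l -> size l <= m.
Proof.
move=> [c [c_lt c_proper]] [l_uniq l_S l_adj].
have c_uniq : uniq [seq c x | x <- l].
  rewrite map_inj_in_uniq // => x y xl yl cxy; apply/eqP; apply/negPn/negP => /eqP nxy.
  by apply: (c_proper x y (l_S x xl) (l_S y yl) _ cxy); apply: l_adj.
rewrite -(size_map c) -(size_iota 0 m); apply: uniq_leq_size c_uniq _ => _ /mapP[x xl ->].
by rewrite mem_iota add0n c_lt //; apply: l_S.
Qed.

Lemma clique_number_is_chromatic :
  (forall m, (forall l, is_clique adj S l -> size l <= m) -> colorable adj S m) ->
  forall n, clique_number_is adj S n <-> chromatic_number_is adj S n.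
Proof.
move=> bound_colorable n; split.
  move=> [[l [l_clique <-]] clique_le]; split; first exact: bound_colorable.
  by move=> m m_col; apply: colorable_clique_size m_col l_clique.
move=> [n_col n_min]; have clique_le l : is_clique adj S l -> size l <= n.
  exact: colorable_clique_size n_col.
pose has_clique j := `[< exists l, is_clique adj S l /\ size l = j >].
have clique0 : exists j, has_clique j.
  by exists 0; apply/asboolP; exists [::]; split=> //; split=> // x; rewrite in_nil.
have clique_bound j : has_clique j -> j <= n by move=> /asboolP[l [/clique_le + <-]].
have [_ /asboolP[l [l_clique <-]] l_max] := ex_maxnP clique0 clique_bound.
have max_le l' : is_clique adj S l' -> size l' <= size l.
  by move=> l'_clique; apply: l_max; apply/asboolP; exists l'.
suff <- : size l = n by split=> //; exists l.
by apply/eqP; rewrite eqn_leq clique_le //=; apply/n_min/bound_colorable.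
Qed.

(* Via Dilworth's theorem: colour [x] by the chain of [I x] in a chain
   partition of the image of [S]. *)
Lemma incomparability_colorable (U : finType) (le : rel U) (I : T -> U) :
  reflexive le -> transitive le ->
  (forall x y, S x -> S y -> adj x y <-> ~~ comparable_rel le (I x) (I y)) ->
  forall m, (forall l, is_clique adj S l -> size l <= m) -> colorable adj S m.
Proof.
move=> le_refl le_trans adj_incomparable m clique_le.
have [[x0 _]|S0] := pselect (exists x, S x); last first.
  by exists (fun=> 0); split=> [x|x y] Sx; case: S0; exists x.
pose P := [set u | `[< exists2 x, S x & I x = u >]].
have [pre pre_spec] : exists pre : U -> T, forall u, u \in P -> S (pre u) /\ I (pre u) = u.
  apply: (@fin_all_exists U (fun=> T) (fun u x => u \in P -> S x /\ I x = u)) => u.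
  case: (boolP (u \in P)); last by exists x0.
  by rewrite inE => /asboolP[x Sx <-]; exists x.
have width_P : width_le le P m.
  move=> A AP /antichainP A_anti.
  have A_pre u : u \in enum A -> S (pre u) /\ I (pre u) = u.
    by rewrite mem_enum => /(subsetP AP)/pre_spec.
  rewrite cardE -(size_map pre); apply: clique_le; split.
  - rewrite map_inj_in_uniq ?enum_uniq // => u v /A_pre[_ Iu] /A_pre[_ Iv] puv.
    by rewrite -Iu puv Iv.
  - by move=> _ /mapP[u /A_pre[Su _] ->].
  - move=> _ _ /mapP[u uA ->] /mapP[v vA ->] neq.
    have [Su Iu] := A_pre u uA; have [Sv Iv] := A_pre v vA.
    apply/(adj_incomparable _ _ Su Sv); rewrite Iu Iv.
    move: uA vA; rewrite !mem_enum => uA vA.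
    by apply: A_anti => //; apply/eqP => euv; apply: neq; rewrite euv.
have [f [f_lt f_chain]] := dilworth le_refl le_trans width_P.
have IP x : S x -> I x \in P by move=> Sx; rewrite inE; apply/asboolP; exists x.
exists (fun x => f (I x)); split=> [x /IP /f_lt // | x y Sx Sy /adj_incomparable].
by move=> /(_ Sx Sy) /negP + fxy; apply; apply: f_chain; rewrite ?IP.
Qed.

End Graph.

Section CompleteIdempotents.
Variable R : comNzRingType.
Local Open Scope ring_scope.

Definition complete_idempotents (s : seq R) : Prop :=
  [/\ uniq s, 0 \notin s, {in s, forall x, x * x = x},
      {in s &, forall x y, x != y -> x * y = 0} & \sum_(x <- s) x = 1].

Definition primitive_idempotent (e : R) : Prop :=
  e * e = e /\ forall f, f * f = f -> f * e = 0 \/ f * e = e.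

Lemma complete_idempotents_clique s : (1 < size s)%N -> complete_idempotents s ->
  is_clique (@cozero_adj R) (@Wstar R) s.
Proof.
move=> s_gt1 [s_uniq s_nz s_idem s_orth _].
have x_nz x : x \in s -> x <> 0 by move=> xs x0; rewrite -x0 xs in s_nz.
have other x : x \in s -> exists2 y, y \in s & y != x.
  move=> xs; apply/hasP; apply: contraTT s_gt1 => /hasPn s_x.
  rewrite -leqNgt (@uniq_leq_size _ _ [:: x]) // => y /s_x.
  by rewrite negbK inE.
have not_principal x y : x \in s -> y \in s -> x != y -> ~ in_principal x y.
  move=> xs ys nxy [r xr]; apply: (x_nz x xs).
  by rewrite -(s_idem x xs) {2}xr mulrCA (s_orth x y) ?mulr0.
have s_Wstar x : x \in s -> Wstar x.
  move=> xs; split; first exact: x_nz.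
  move=> -[z xz]; have [y ys nyx] := other x xs; apply: (x_nz y ys).
  by rewrite -[y]mulr1 -xz mulrA (s_orth y x) ?mul0r.
split=> // x y xs ys nxy; have nxy' : x != y by apply/eqP.
split; [exact: s_Wstar | exact: s_Wstar | exact: nxy | exact: not_principal |].
by apply: not_principal; rewrite // eq_sym.
Qed.

Lemma complete_idempotents_split s e (A B : R) :
  complete_idempotents s -> e \in s ->
  A * A = A -> B * B = B -> A * B = 0 -> A + B = e -> A != 0 -> B != 0 ->
  complete_idempotents [:: A, B & rem e s].
Proof.
move=> [s_uniq s_nz s_idem s_orth s_sum] es AA BB AB ABe A_nz B_nz.
have BA : B * A = 0 by rewrite mulrC.
have in_rem x : x \in rem e s -> x \in s /\ x != e.
  by rewrite (mem_rem_uniq _ s_uniq) inE => /andP[].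
have off_e C x : C * e = C -> x \in rem e s -> C * x = 0.
  by move=> Ce /in_rem[xs nxe]; rewrite -Ce -mulrA (s_orth e x) ?mulr0 // eq_sym.
have A_rem x : x \in rem e s -> A * x = 0.
  by apply: off_e; rewrite -ABe mulrDr AA AB addr0.
have B_rem x : x \in rem e s -> B * x = 0.
  by apply: off_e; rewrite -ABe mulrDr BA BB add0r.
have notin_rem C : C * C = C -> C != 0 -> (forall x, x \in rem e s -> C * x = 0) ->
    C \notin rem e s.
  by move=> CC C_nz C_rem; apply: contra C_nz => /C_rem; rewrite CC => ->.
split.
- rewrite /= inE negb_or (rem_uniq _ s_uniq) (notin_rem A) // (notin_rem B) // !andbT.
  by apply: contra A_nz => /eqP AeB; rewrite -AA {2}AeB AB.
- rewrite !inE !negb_or ![0 == _]eq_sym A_nz B_nz /=.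
  by apply: contra s_nz => /in_rem[].
- by move=> x; rewrite !inE => /orP[/eqP->|/orP[/eqP->|/in_rem[/s_idem]]].
- move=> x y; rewrite !inE.
  case/or3P=> [/eqP->|/eqP->|xr]; case/or3P=> [/eqP->|/eqP->|yr];
    rewrite ?eqxx // => nxy.
  + exact: A_rem.
  + exact: B_rem.
  + by rewrite mulrC A_rem.
  + by rewrite mulrC B_rem.
  + by have [xs nxe] := in_rem x xr; have [ys nye] := in_rem y yr; apply: s_orth.
- by rewrite !big_cons addrA ABe -s_sum (perm_big _ (perm_to_rem es)) big_cons.
Qed.

Lemma complete_idempotents_size_le m s :
  (forall l, is_clique (@cozero_adj R) (@Wstar R) l -> (size l <= m)%N) ->
  complete_idempotents s -> (size s <= maxn m 1)%N.
Proof.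
move=> clique_le s_complete; case: (leqP (size s) 1) => [s_le1|s_gt1].
  by rewrite leq_max s_le1 orbT.
by rewrite leq_max (clique_le _ (complete_idempotents_clique s_gt1 s_complete)).
Qed.

Lemma complete_idempotents1 : complete_idempotents [:: 1].
Proof.
split=> //; first by rewrite inE eq_sym oner_neq0.
- by move=> x; rewrite inE => /eqP->; rewrite mulr1.
- by move=> x y; rewrite !inE => /eqP-> /eqP->; rewrite eqxx.
- by rewrite big_seq1.
Qed.

(* A complete family of maximal length consists of primitive idempotents,
   since [e = f e + (1 - f) e] would otherwise refine it. *)
Lemma exists_primitive_complete_idempotents m :
  (forall l, is_clique (@cozero_adj R) (@Wstar R) l -> (size l <= m)%N) ->
  exists2 s, complete_idempotents s & {in s, forall e, primitive_idempotent e}.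
Proof.
move=> clique_le.
pose has_family n := `[< exists s, complete_idempotents s /\ size s = n >].
have family1 : exists n, has_family n.
  by exists 1%N; apply/asboolP; exists [:: 1]; split=> //; apply: complete_idempotents1.
have family_le n : has_family n -> (n <= maxn m 1)%N.
  by move=> /asboolP[s [s_complete <-]]; apply: complete_idempotents_size_le s_complete.
have [_ /asboolP[s [s_complete <-]] s_max] := ex_maxnP family1 family_le.
exists s => // e es; have [_ _ s_idem _ _] := s_complete; have ee := s_idem e es.
split=> // f ff; case: (eqVneq (f * e) 0) => [|fe_nz]; first by left.
case: (eqVneq (f * e) e) => [|fe_ne]; first by right.
have f_compl : f * (1 - f) = 0 by rewrite mulrBr mulr1 ff subrr.
have refined : complete_idempotents [:: f * e, (1 - f) * e & rem e s].
  apply: complete_idempotents_split => //.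
  - by rewrite mulrACA ff ee.
  - by rewrite mulrACA ee mulrBl mul1r mulrBr mulr1 ff subrr subr0.
  - by rewrite mulrACA f_compl mul0r.
  - by rewrite -mulrDl addrC subrK mul1r.
  - by rewrite mulrBl mul1r subr_eq0 eq_sym.
suff : (size s < size s)%N by rewrite ltnn.
apply: s_max; apply/asboolP; exists [:: f * e, (1 - f) * e & rem e s]; split=> //.
by rewrite (perm_size (perm_to_rem es)).
Qed.

End CompleteIdempotents.

Section RegularRing.
Variables (R : comNzRingType) (s : seq R).
Local Open Scope ring_scope.
Hypothesis R_regular : von_neumann_regular R.
Hypotheses (s_complete : complete_idempotents s)
  (s_primitive : {in s, forall e, primitive_idempotent e}).

Lemma primitive_idempotent_principal (e b : R) :
  primitive_idempotent e -> b * e != 0 -> in_principal e b.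
Proof.
move=> [ee e_prim] be_nz; have [t be_reg] := R_regular (b * e).
pose g := b * e * t.
have gg : g * g = g by rewrite /g mulrACA -expr2 mulrA -be_reg.
have ge : g * e = g by rewrite /g mulrAC -[b * e * e]mulrA ee.
case: (e_prim g gg) => [g0|ge_e].
  by move: be_nz; rewrite be_reg expr2 -mulrA -/g -ge g0 mulr0 eqxx.
by exists (e * t); rewrite -[LHS]ge_e ge /g -mulrA mulrC.
Qed.

Definition support (x : R) : {set seq_sub s} := [set y | x * val y != 0].

Lemma in_principal_support (a b : R) : in_principal a b <-> support a \subset support b.
Proof.
split=> [[r ->]|/subsetP ab_sub].
  apply/subsetP => y; rewrite !inE.
  by apply: contra_neq => by0; rewrite -mulrA by0 mulr0.
have [_ _ _ _ s_sum] := s_complete.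
rewrite -[a]mulr1 -s_sum mulr_sumr big_seq.
apply: (big_ind (fun x => in_principal x b)) => [|x y [r ->] [r' ->]|x xs].
- by exists 0; rewrite mul0r.
- by exists (r + r'); rewrite mulrDl.
have [ax0|ax_nz] := eqVneq (a * x) 0; first by exists 0; rewrite ax0 mul0r.
have := ab_sub (SeqSub xs); rewrite !inE /= => /(_ ax_nz) bx_nz.
have [r xr] := primitive_idempotent_principal (s_primitive xs) bx_nz.
by exists (a * r); rewrite {1}xr mulrA.
Qed.

Lemma cozero_adj_support (a b : R) : Wstar a -> Wstar b ->
  cozero_adj a b <->
  ~~ comparable_rel (fun A B : {set seq_sub s} => A \subset B) (support a) (support b).
Proof.
move=> Wa Wb; rewrite /comparable_rel negb_or.
split=> [[_ _ _ nab nba]|/andP[/negP nab /negP nba]].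
  by apply/andP; split; apply/negP => /in_principal_support.
split=> //; last by move/in_principal_support.
  by move=> eab; apply: nab; rewrite eab.
by move/in_principal_support.
Qed.

End RegularRing.

Theorem theorem3p4 (R : comNzRingType) :
  von_neumann_regular R ->
  finite_clique_number (@cozero_adj R) (@Wstar R) ->
  perfect (@cozero_adj R) (@Wstar R).
Proof.
move=> R_regular [m clique_le] S SW.
have [s s_complete s_primitive] := exists_primitive_complete_idempotents clique_le.
apply: clique_number_is_chromatic => n S_clique_le.
apply: (incomparability_colorable (le := fun A B : {set seq_sub s} => A \subset B)
          (I := support s) _ _ _ S_clique_le).
- exact: subxx.
- by move=> A B C; apply: subset_trans.
- by move=> x y Sx Sy; apply: cozero_adj_support => //; apply: SW.
Qed.
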